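(* Let $d\ge 2$ and identify $F_d(\mathfrak B)^2$ with $G_d^2\subset K[Y_d,Z_d]$ as described in the context. For each $n\ge2$ and each partition $\lambda=(\lambda_1,\lambda_2)\vdash n$, the following elements form a maximal linearly independent system of highest weight vectors of $GL_d$-submodules of $G_d^2$ isomorphic to $W(\lambda)$ (i.e. every such highest weight vector is a linear combination of them, and their number equals the multiplicity of $W(\lambda)$): $w^{(j)}_{(n)}=y_1^jz_1^{n-j}$ for $j=1,\dots,n-1$ if $\lambda=(n)$; and $w^{(j)}_\lambda=y_1^j(y_1z_2-y_2z_1)^{\lambda_2}z_1^{\lambda_1-\lambda_2-j}$ for $j=0,1,\dots,\lambda_1-\lambda_2$ if $\lambda_2>0$.
   Context: $K$ is a field of characteristic $0$. $\mathfrak B$ is the variety of bicommutative algebras (identities $(x_1x_2)x_3=(x_1x_3)x_2$, $x_1(x_2x_3)=x_2(x_1x_3)$) with free algebra $F_d(\mathfrak B)$ on $x_1,\dots,x_d$. Model: let $K[Y_d,Z_d]$ be the commutative polynomial ring in $y_1,\dots,y_d,z_1,\dots,z_d$, and $G_d$ the algebra with basis $\{x_1,\dots,x_d\}\cup\{Y^\alpha Z^\beta:|\alpha|>0,|\beta|>0\}$ and multiplication $x_ix_j=y_iz_j$, $x_i\cdot(Y^\alpha Z^\beta)=y_iY^\alpha Z^\beta$, $(Y^\alpha Z^\beta)\cdot x_j=Y^\alpha Z^\beta z_j$, $(Y^\alpha Z^\beta)(Y^\gamma Z^\delta)=Y^{\alpha+\gamma}Z^{\beta+\delta}$; it is known that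 $x_i\mapsto x_i$ gives an isomorphism $F_d(\mathfrak B)\cong G_d$ of multigraded algebras, so $F_d(\mathfrak B)^2$ is identified with $G_d^2$, the span of monomials of positive degree in both the $y$'s and the $z$'s. $GL_d$ acts on $G_d^2$ by acting on $\mathrm{span}(y_i)$ and on $\mathrm{span}(z_i)$ in the same way as on $\mathrm{span}(x_i)$, extended multiplicatively. $W(\lambda)$ is the irreducible polynomial $GL_d$-module indexed by $\lambda$; a highest weight vector of a submodule isomorphic to $W(\lambda)$ is a nonzero element of multidegree $\lambda$ (degree $\lambda_i$ in the pair $y_i,z_i$) generating it, equivalently annihilated by the derivations $y_j\mapsto y_i,z_j\mapsto z_i$ (other variables $\mapsto 0$) for all $i<j$. *)

From HB Require Import structures.
From mathcomp Require Import all_boot all_order all_algebra.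
Unset Printing Implicit Defensive.
Import GRing.Theory.
Local Open Scope ring_scope.

(* Commutative polynomial ring in n variables X_0, ..., X_(n-1) over K,
   built as iterated univariate polynomials: MP K (n+1) = {poly MP K n},
   the outermost variable being X_n. *)
Fixpoint MP (K : fieldType) (n : nat) : comNzRingType :=
  match n with
  | 0 => K
  | n'.+1 => {poly MP K n'}
  end.

Fixpoint mvar (K : fieldType) (n k : nat) : MP K n :=
  match n return MP K n with
  | 0 => 0
  | n'.+1 => if k == n' then ('X : {poly MP K n'}) else (mvar K n' k)%:P
  end.

Fixpoint mconst (K : fieldType) (n : nat) : K -> MP K n :=
  match n return K -> MP K n with
  | 0 => fun c => c
  | n'.+1 => fun c => (mconst K n' c)%:P
  end.

(* coefficient of the monomial prod_(k<n) X_k^(e k) *)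
Fixpoint mcoef (K : fieldType) (n : nat) : MP K n -> (nat -> nat) -> K :=
  match n return MP K n -> (nat -> nat) -> K with
  | 0 => fun p _ => p
  | n'.+1 => fun (p : {poly MP K n'}) e => mcoef K n' (p`_(e n')) e
  end.

Fixpoint pder (K : fieldType) (n k : nat) : MP K n -> MP K n :=
  match n return MP K n -> MP K n with
  | 0 => fun _ => 0
  | n'.+1 => fun (p : {poly MP K n'}) =>
      if k == n' then deriv p else map_poly (pder K n' k) p
  end.

(* K[Y_d, Z_d]: y_i = X_i, z_i = X_(d+i), for i < d (0-based indices,
   so y_1, z_1 of the paper are y K d 0, z K d 0). *)
Definition KYZ (K : fieldType) (d : nat) := MP K (d + d).
Definition y (K : fieldType) (d i : nat) : KYZ K d := mvar K (d + d) i.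
Definition z (K : fieldType) (d i : nat) : KYZ K d := mvar K (d + d) (d + i).

Definition inG2 (K : fieldType) (d : nat) (f : KYZ K d) : Prop :=
  forall e : nat -> nat, mcoef K (d + d) f e != 0 ->
    (0 < \sum_(i < d) e i)%N /\ (0 < \sum_(i < d) e (d + i))%N.

Definition wt (l1 l2 : nat) (i : nat) : nat :=
  if i == 0%N then l1 else if i == 1%N then l2 else 0%N.

Definition has_multideg (K : fieldType) (d : nat) (lam : nat -> nat)
    (f : KYZ K d) : Prop :=
  forall e : nat -> nat, mcoef K (d + d) f e != 0 ->
    forall i, (i < d)%N -> (e i + e (d + i))%N = lam i.

Definition Dder (K : fieldType) (d i j : nat) (f : KYZ K d) : KYZ K d :=
  y K d i * pder K (d + d) j f + z K d i * pder K (d + d) (d + j) f.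

Definition is_hwv (K : fieldType) (d : nat) (lam : nat -> nat)
    (f : KYZ K d) : Prop :=
  [/\ f != 0, inG2 K d f, has_multideg K d lam f &
      forall i j, (i < j)%N -> (j < d)%N -> Dder K d i j f = 0].

Definition max_hwv_system (K : fieldType) (d : nat) (lam : nat -> nat)
    (N : nat) (w : 'I_N -> KYZ K d) : Prop :=
  [/\ forall k, is_hwv K d lam (w k),
      forall c : 'I_N -> K,
        \sum_(k < N) mconst K (d + d) (c k) * w k = 0 -> forall k, c k = 0
    & forall f, is_hwv K d lam f ->
        exists c : 'I_N -> K, f = \sum_(k < N) mconst K (d + d) (c k) * w k].

From HB Require Import structures.
From mathcomp Require Import all_boot all_order all_algebra zify ring.
Import GRing.Theory.
Set Implicit Arguments.
Unset Strict Implicit.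
Local Open Scope ring_scope.

(* A highest weight vector f of weight (l1, l2) involves only y_1, y_2, z_1, z_2, so it is
   a combination of the monomials y_1^a y_2^p z_1^(l1-a) z_2^(l2-p), with coefficients
   c(a, p).  The equation D_12 f = 0 for D_12 = y_1 d/dy_2 + z_1 d/dz_2 reads
   (p+1) c(a, p+1) + (l2-p) c(a+1, p) = 0, so in characteristic 0 f is determined by its
   row c(-, 0), and the same recursion forces c(a, 0) = 0 for a < l2; if l2 = 0, lying in
   G_d^2 also kills c(0, 0) and c(l1, 0).  The row of w^(j) is c(a, 0) = [a = j + l2],
   which gives linear independence and spanning at once.  The w^(j) are highest weight
   vectors because y_1, z_1 and y_1 z_2 - y_2 z_1 are eigenvectors of every Euler operator
   y_i d/dy_i + z_i d/dz_i and are killed by every D_ik with i < k. *)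

Section Coefficients.
Variable K : fieldType.

Lemma mcoef_dep n (p : MP K n) e e' :
  {in gtn n, e =1 e'} -> mcoef K n p e = mcoef K n p e'.
Proof.
elim: n p e e' => [|n IH] p e e' ee' //=.
rewrite ee' ?inE //; apply: IH => k /ltnW hk; exact: ee'.
Qed.

Lemma mcoef_ext n (p : MP K n) e e' : e =1 e' -> mcoef K n p e = mcoef K n p e'.
Proof. by move=> ee'; apply: mcoef_dep => k _. Qed.

Lemma mcoef0 n e : mcoef K n 0 e = 0.
Proof. by elim: n => //= n IH; rewrite coef0 IH. Qed.

Lemma mcoefB n (p q : MP K n) e :
  mcoef K n (p - q) e = mcoef K n p e - mcoef K n q e.
Proof. by elim: n p q => //= n IH p q; rewrite coefB IH. Qed.

Lemma mcoefD n (p q : MP K n) e :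
  mcoef K n (p + q) e = mcoef K n p e + mcoef K n q e.
Proof. by elim: n p q => //= n IH p q; rewrite coefD IH. Qed.

Lemma mcoef_sum n I (r : seq I) (P : pred I) (F : I -> MP K n) e :
  mcoef K n (\sum_(i <- r | P i) F i) e = \sum_(i <- r | P i) mcoef K n (F i) e.
Proof. by apply: (big_morph (mcoef K n ^~ e)) => [p q|]; rewrite ?mcoefD ?mcoef0. Qed.

Lemma mcoefMn n (p : MP K n) m e : mcoef K n (p *+ m) e = mcoef K n p e *+ m.
Proof. by elim: m => [|m IH]; rewrite ?mulr0n ?mcoef0 // !mulrS mcoefD IH. Qed.

Lemma mcoefCM n c (p : MP K n) e :
  mcoef K n (mconst K n c * p) e = c * mcoef K n p e.
Proof. by elim: n p => //= n IH p; rewrite coefCM IH. Qed.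

Lemma mcoefP n (p q : MP K n) : (forall e, mcoef K n p e = mcoef K n q e) -> p = q.
Proof.
elim: n p q => [|n IH] p q pq; first exact: (pq (fun=> 0%N)).
apply/polyP => i; apply: IH => e; have := pq [eta e with n |-> i]; rewrite /= eqxx.
have upd_n (r : MP K n) : mcoef K n r [eta e with n |-> i] = mcoef K n r e.
  by apply: mcoef_dep => k; rewrite inE /= => /ltn_eqF ->.
by rewrite !upd_n.
Qed.

Lemma mcoef1_0 n : mcoef K n 1 (fun=> 0%N) = 1.
Proof. by elim: n => //= n IH; rewrite coef1. Qed.

Lemma mcoefXM n k (p : MP K n) e : (k < n)%N ->
  mcoef K n (mvar K n k * p) e =
  if (0 < e k)%N then mcoef K n p [eta e with k |-> (e k).-1] else 0.
Proof.
elim: n p e => [|n IH] p e //= hk.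
have [->|nk] := eqVneq k n.
  rewrite coefXM; case: (e n) => [|m] /=; first by rewrite mcoef0.
  by apply: mcoef_dep => i; rewrite inE /= => /ltn_eqF ->.
have hk' : (k < n)%N by rewrite ltn_neqAle nk -ltnS.
by rewrite coefCM IH.
Qed.

Lemma mcoefXnM n k m (p : MP K n) e : (k < n)%N ->
  mcoef K n (mvar K n k ^+ m * p) e =
  if (m <= e k)%N then mcoef K n p [eta e with k |-> (e k - m)%N] else 0.
Proof.
move=> hk; elim: m p e => [|m IH] p e.
  by rewrite mul1r subn0; apply: mcoef_ext => i /=; case: eqP => [->|].
rewrite exprSr -mulrA IH mcoefXM //= eqxx subn_gt0 -subnS.
case: (ltnP m (e k)) => [hm|_]; last by case: ifP.
by rewrite ltnW //; apply: mcoef_ext => i /=; case: eqP.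
Qed.

Lemma mcoefXnM_peel n k m (p : MP K n) e e' :
  (k < n)%N -> e k = m -> e' k = 0%N -> (forall i, i != k -> e i = e' i) ->
  mcoef K n (mvar K n k ^+ m * p) e = mcoef K n p e'.
Proof.
move=> hk ekm e'k ee'; rewrite mcoefXnM // ekm leqnn subnn; apply: mcoef_ext => i /=.
by case: eqP => [->|/eqP /ee'].
Qed.

Lemma pder0 n k : pder K n k 0 = 0.
Proof. by elim: n => //= n IH; case: eqP => _; [exact: deriv0 | exact: map_poly0]. Qed.

Lemma pderB n k : {morph pder K n k : p q / p - q}.
Proof.
elim: n => [|n IH] p q /=; first by rewrite subr0.
case: eqP => _; first exact: derivB.
by apply/polyP => i; rewrite coefB !coef_map_id0 ?pder0 // coefB IH.
Qed.

HB.instance Definition _ n k :=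
  GRing.isZmodMorphism.Build (MP K n) (MP K n) (pder K n k) (@pderB n k).

Lemma pderM n k (p q : MP K n) : pder K n k (p * q) = pder K n k p * q + p * pder K n k q.
Proof.
elim: n p q => [|n IH] p q /=; first by rewrite mul0r mulr0 addr0.
case: eqP => _; first exact: derivM.
apply/polyP => i; rewrite coef_map_id0 ?pder0 // coefM raddf_sum coefD !coefM -big_split /=.
by apply: eq_bigr => j _; rewrite IH !coef_map_id0 ?pder0.
Qed.

Lemma pder_mconst n k c : pder K n k (mconst K n c) = 0.
Proof.
elim: n => //= n IH; case: eqP => _; first exact: derivC.
by rewrite map_polyC /= IH.
Qed.

Lemma pderCM n k c (p : MP K n) :
  pder K n k (mconst K n c * p) = mconst K n c * pder K n k p.
Proof. by rewrite pderM pder_mconst mul0r add0r. Qed.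

Lemma mconst1 n : mconst K n 1 = 1.
Proof. by elim: n => //= n ->. Qed.

Lemma pder1 n k : pder K n k 1 = 0.
Proof. by rewrite -(mconst1 n) pder_mconst. Qed.

Lemma pder_mvar n k m : (m < n)%N -> pder K n k (mvar K n m) = (k == m)%:R.
Proof.
elim: n => // n IH hm /=.
have [->|nm] := eqVneq m n; have [kn|kn] := eqVneq k n.
- by rewrite derivX.
- apply/polyP => i; rewrite coef_map_id0 ?pder0 // coefX mulr0n coef0.
  by case: (i == 1%N); rewrite ?pder1 ?pder0.
- by rewrite derivC kn eq_sym (negPf nm).
- have hm' : (m < n)%N by rewrite ltn_neqAle nm -ltnS.
  by rewrite map_polyC /= IH // polyC_natr.
Qed.

Lemma mcoef_pder n k (p : MP K n) e : (k < n)%N ->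
  mcoef K n (pder K n k p) e = (e k).+1%:R * mcoef K n p [eta e with k |-> (e k).+1].
Proof.
elim: n p e => // n IH p e hk /=.
have [->|kn] := eqVneq k n.
  rewrite coef_deriv mcoefMn mulr_natl; congr (_ *+ _).
  by apply: mcoef_dep => i; rewrite inE /= => /ltn_eqF ->.
have hk' : (k < n)%N by rewrite ltn_neqAle kn -ltnS.
by rewrite coef_map_id0 ?pder0 // IH.
Qed.

Lemma mcoef_euler n k (p : MP K n) e : (k < n)%N ->
  mcoef K n (mvar K n k * pder K n k p) e = (e k)%:R * mcoef K n p e.
Proof.
move=> hk; rewrite mcoefXM //; case: (posnP (e k)) => [->|ek]; first by rewrite mul0r.
rewrite mcoef_pder //= eqxx prednK //; congr (_ * _).
by apply: mcoef_ext => i /=; case: eqP => [->|].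
Qed.
End Coefficients.
Arguments mcoefXnM_peel {K n k m p e} e'.

Definition pder2 (K : fieldType) n (a b : MP K n) k1 k2 (f : MP K n) : MP K n :=
  a * pder K n k1 f + b * pder K n k2 f.

Section Derivation.
Variables (K : fieldType) (n : nat) (a b : MP K n) (k1 k2 : nat).
Local Notation D := (pder2 a b k1 k2).

Lemma pder2B : {morph D : f g / f - g}.
Proof. by move=> f g; rewrite /pder2 !raddfB /=; ring. Qed.

HB.instance Definition _ := GRing.isZmodMorphism.Build (MP K n) (MP K n) D pder2B.

Lemma pder2M f g : D (f * g) = D f * g + f * D g.
Proof. by rewrite /pder2 !pderM; ring. Qed.

Lemma pder2CM c f : D (mconst K n c * f) = mconst K n c * D f.
Proof. by rewrite /pder2 !pderCM; ring. Qed.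

Lemma pder2_mvar m : (m < n)%N -> D (mvar K n m) = a *+ (k1 == m) + b *+ (k2 == m).
Proof. by move=> hm; rewrite /pder2 !pder_mvar // !mulr_natr. Qed.

Lemma pder2_eigM f g al be :
  D f = al * f -> D g = be * g -> D (f * g) = (al + be) * (f * g).
Proof. by move=> Df Dg; rewrite pder2M Df Dg; ring. Qed.

Lemma pder2_eigX f al m : D f = al * f -> D (f ^+ m) = al *+ m * f ^+ m.
Proof.
move=> Df; elim: m => [|m IH]; first by rewrite /pder2 !pder1; ring.
by rewrite exprS (pder2_eigM Df IH) mulrS.
Qed.

End Derivation.

Lemma pchar0_natr_inj (K : fieldType) (a b : nat) :
  [pchar K] =i pred0 -> a%:R = b%:R :> K -> a = b.
Proof.
move=> /pcharf0P K0; wlog le_ab : a b / (a <= b)%N.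
  move=> W; case: (leqP a b) => [|/ltnW] h eq_ab; first exact: W.
  by rewrite (W b a h (esym eq_ab)).
by move=> eq_ab; apply/eqP; rewrite eqn_leq le_ab /= -subn_eq0 -K0 natrB // eq_ab subrr.
Qed.

Lemma euler_support (K : fieldType) (charK0 : [pchar K] =i pred0) n k1 k2
    (f : MP K n) c e :
  pder2 (mvar K n k1) (mvar K n k2) k1 k2 f = c%:R * f -> mcoef K n f e != 0 ->
  (k1 < n)%N -> (k2 < n)%N -> (e k1 + e k2)%N = c.
Proof.
move=> Df nz h1 h2; apply: (pchar0_natr_inj charK0); apply: (mulIf nz).
by rewrite natrD mulrDl -!mcoef_euler // -mcoefD mulr_natl -mcoefMn -mulr_natl -Df.
Qed.

Ltac case_nat_eqs :=
  repeat match goal with |- context [?x == ?y] => case: (x =P y) => ? /= end.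

Ltac nat_cases := case_nat_eqs; try subst; lia.

Section Multidegree.
Variables (K : fieldType) (d : nat) (lam : nat -> nat).
Local Notation mdeg := (has_multideg K d lam).

Lemma has_multideg0 : mdeg 0.
Proof. by move=> e; rewrite mcoef0 eqxx. Qed.

Lemma has_multidegD f g : mdeg f -> mdeg g -> mdeg (f + g).
Proof.
move=> mf mg e; rewrite mcoefD; have [f0|/mf//] := eqVneq (mcoef K (d + d) f e) 0.
by rewrite f0 add0r => /mg.
Qed.

Lemma has_multidegCM c f : mdeg f -> mdeg (mconst K (d + d) c * f).
Proof. by move=> mf e; rewrite mcoefCM mulf_eq0 negb_or => /andP[_ /mf]. Qed.

Lemma has_multideg_lincomb N (c : 'I_N -> K) (w : 'I_N -> KYZ K d) :
  (forall k, mdeg (w k)) -> mdeg (\sum_(k < N) mconst K (d + d) (c k) * w k).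
Proof.
move=> mw; apply: (big_ind mdeg); [exact: has_multideg0 | exact: has_multidegD |].
by move=> k _; apply: has_multidegCM.
Qed.

Lemma has_multidegB f g : mdeg f -> mdeg g -> mdeg (f - g).
Proof.
move=> mf mg e; rewrite mcoefB; have [f0|/mf//] := eqVneq (mcoef K (d + d) f e) 0.
by rewrite f0 sub0r oppr_eq0 => /mg.
Qed.

End Multidegree.

Lemma DderE (K : fieldType) d i j : Dder K d i j =1 pder2 (y K d i) (z K d i) j (d + j).
Proof. by []. Qed.

Lemma Dder_lincomb (K : fieldType) d i j (f : KYZ K d) N (c : 'I_N -> K) w :
  Dder K d i j (f - \sum_(k < N) mconst K (d + d) (c k) * w k) =
  Dder K d i j f - \sum_(k < N) mconst K (d + d) (c k) * Dder K d i j (w k).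
Proof. by rewrite DderE raddfB raddf_sum /=; under eq_bigr do rewrite pder2CM. Qed.

Lemma eq_max_hwv_system (K : fieldType) d lam N (w w' : 'I_N -> KYZ K d) :
  max_hwv_system K d lam N w -> w =1 w' -> max_hwv_system K d lam N w'.
Proof.
move=> [hw indep span] ww'; split => [k | c | f /span [c ->]].
- by rewrite -ww'.
- by move=> sum0; apply: indep; under eq_bigr do rewrite ww'.
- by exists c; under eq_bigr do rewrite ww'.
Qed.

Lemma exprD_mod_mul (R : comNzRingType) (u v t : R) m :
  exists s, (u + t * v) ^+ m = u ^+ m + t * s.
Proof.
elim: m => [|m [s IH]]; first by exists 0; rewrite !expr0 mulr0 addr0.
by exists (s * (u + t * v) + u ^+ m * v); rewrite exprS IH exprS; ring.
Qed.

Ltac pder2_mvars :=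
  rewrite ?raddfB /= ?pder2M ?pder2_mvar; [case_nat_eqs; first [ring | exfalso; lia] | lia ..].

Section HighestWeightVectors.
Variables (K : fieldType) (d l1 l2 : nat).
Hypotheses (charK0 : [pchar K] =i pred0) (d_ge2 : (2 <= d)%N) (le_l21 : (l2 <= l1)%N).

Local Notation R := (KYZ K d).
Local Notation coef := (mcoef K (d + d)).
Local Notation y0 := (mvar K (d + d) 0).
Local Notation y1 := (mvar K (d + d) 1).
Local Notation z0 := (mvar K (d + d) d).
Local Notation z1 := (mvar K (d + d) (d + 1)).

Definition yz_exp a b c e : nat -> nat :=
  [eta (fun=> 0%N) with 0%N |-> a, 1%N |-> b, d |-> c, (d + 1)%N |-> e].

Definition wt_exp a p := yz_exp a p (l1 - a) (l2 - p).

Local Ltac yz_cases := try move=> i; unfold yz_exp; simpl; nat_cases.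

Lemma yz_exp_z0 a b c e : yz_exp a b c e d = c.
Proof. by rewrite /yz_exp /=; nat_cases. Qed.

Lemma mcoef_Dder01 (g : R) a b c e :
  coef (Dder K d 0 1 g) (yz_exp a b c e) =
    (if (0 < a)%N then b.+1%:R * coef g (yz_exp a.-1 b.+1 c e) else 0) +
    (if (0 < c)%N then e.+1%:R * coef g (yz_exp a b c.-1 e.+1) else 0).
Proof.
rewrite /Dder /y /z addn0 mcoefD !mcoefXM ?yz_exp_z0; [|lia ..].
congr (_ + _); case: ifP => // _; (rewrite mcoef_pder; last lia).
all: by congr (_.+1%:R * _); try apply: mcoef_ext; yz_cases.
Qed.

Lemma multideg_mcoef (g : R) e :
  has_multideg K d (wt l1 l2) g -> coef g e != 0 ->
  [/\ (e 0 <= l1)%N, (e 1 <= l2)%N & coef g e = coef g (wt_exp (e 0%N) (e 1%N))].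
Proof.
move=> /(_ e) mdeg /mdeg {}mdeg.
have := mdeg 0%N; have := mdeg 1%N; rewrite /wt /= addn0 => deg1 deg0.
split; [lia | lia | apply: mcoef_dep => k; rewrite inE /wt_exp /yz_exp /= => hk].
have [kd|dk] := ltnP k d; first by have := mdeg k kd; rewrite /wt; nat_cases.
by have := mdeg (k - d)%N; rewrite /wt subnKC //; nat_cases.
Qed.

Lemma natrS_neq0 m : m.+1%:R != 0 :> K.
Proof. by rewrite (pcharf0P K).1. Qed.

Lemma mul_natrS_eq0 m (x : K) : m.+1%:R * x = 0 -> x = 0.
Proof. by move/eqP; rewrite mulf_eq0 (negPf (natrS_neq0 m)) => /eqP. Qed.

Section Dder01Kernel.
Variables (g : R) (Dg0 : Dder K d 0 1 g = 0).
Local Notation c a p := (coef g (wt_exp a p)).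

Lemma Dder01_coef_rec a p : (p < l2)%N ->
  p.+1%:R * c a p.+1 + (if (a < l1)%N then (l2 - p)%:R * c a.+1 p else 0) = 0.
Proof.
move=> lt_pl2; have := mcoef_Dder01 g a.+1 p (l1 - a) (l2 - p.+1).
by rewrite Dg0 mcoef0 subn_gt0 -subnS subnSK // => /esym ->.
Qed.

Lemma Dder01_coef_0p p : (p < l2)%N -> c 0%N p = 0.
Proof.
move=> lt_pl2; have := mcoef_Dder01 g 0 p l1.+1 (l2 - p.+1).
rewrite Dg0 mcoef0 /= add0r => /esym/mul_natrS_eq0.
by rewrite subnSK // /wt_exp subn0.
Qed.

Lemma Dder01_coef_low a : (a < l2)%N -> c a 0%N = 0.
Proof.
move=> lt_al2.
suff coef0 b p : (b + p < l2)%N -> c b p = 0 by apply: coef0; rewrite addn0.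
elim: b p => [|b IH] p lt_bpl2; first exact: Dder01_coef_0p.
have lt_pl2 : (p < l2)%N by lia.
have := Dder01_coef_rec b lt_pl2; rewrite IH ?mulr0 ?add0r; last lia.
by rewrite ifT -?(subnSK lt_pl2); [move/mul_natrS_eq0 | lia].
Qed.

Lemma Dder01_eq0 : has_multideg K d (wt l1 l2) g ->
  (forall a, (a <= l1)%N -> c a 0%N = 0) -> g = 0.
Proof.
move=> mdeg row0.
have coef0 p : (p <= l2)%N -> forall a, (a <= l1)%N -> c a p = 0.
  elim: p => [|p IH] lt_pl2 a le_al1; first exact: row0.
  have := Dder01_coef_rec a lt_pl2; case: ifP => [lt_al1|_].
    by rewrite (IH (ltnW lt_pl2)) // mulr0 addr0 => /mul_natrS_eq0.
  by rewrite addr0 => /mul_natrS_eq0.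
apply: mcoefP => e; rewrite mcoef0; have [//|nz] := eqVneq (coef g e) 0.
by have [? ? ->] := multideg_mcoef mdeg nz; apply: coef0.
Qed.

End Dder01Kernel.

Lemma max_hwv_system_of_row N s (w : 'I_N -> R) :
  (s + N <= l1.+1)%N ->
  (forall k, is_hwv K d (wt l1 l2) (w k)) ->
  (forall k a, (a <= l1)%N -> coef (w k) (wt_exp a 0) = (a == k + s)%N%:R) ->
  (forall f, is_hwv K d (wt l1 l2) f -> forall a, (a <= l1)%N ->
     (a < s)%N || (s + N <= a)%N -> coef f (wt_exp a 0) = 0) ->
  max_hwv_system K d (wt l1 l2) N w.
Proof.
move=> le_sNl1 hw row_w row_f.
pose lincomb (c : 'I_N -> K) := \sum_(k < N) mconst K (d + d) (c k) * w k.
have row_lincomb c a : (a <= l1)%N ->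
    coef (lincomb c) (wt_exp a 0) = \sum_(k < N) c k * (a == k + s)%N%:R.
  by move=> le_al1; rewrite mcoef_sum; under eq_bigr do rewrite mcoefCM row_w //.
have row_in c (k : 'I_N) : coef (lincomb c) (wt_exp (k + s) 0) = c k.
  rewrite row_lincomb; last by have := ltn_ord k; lia.
  rewrite (bigD1 k) //= eqxx mulr1 big1 ?addr0 // => j ne_jk.
  by rewrite eqn_add2r val_eqE eq_sym (negPf ne_jk) mulr0.
have row_out c a : (a <= l1)%N -> (a < s)%N || (s + N <= a)%N ->
    coef (lincomb c) (wt_exp a 0) = 0.
  move=> le_al1 out; rewrite row_lincomb // big1 // => k _.
  by case: eqP => [a_ks|]; [move: out; rewrite a_ks; have := ltn_ord k; lia | rewrite mulr0].
split => // [c sum0 k | f hf].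
  by have := congr1 (coef^~ (wt_exp (k + s) 0)) sum0; rewrite /= row_in mcoef0.
exists (fun k => coef f (wt_exp (k + s) 0)); apply/eqP; rewrite -subr_eq0; apply/eqP.
have [_ _ mf Df] := hf.
apply: Dder01_eq0.
- by rewrite Dder_lincomb Df // big1 ?subrr // => k _; have [_ _ _ ->] := hw k; rewrite ?mulr0.
- by apply: has_multidegB => //; apply: has_multideg_lincomb => k; have [] := hw k.
move=> a le_al1; rewrite mcoefB.
have [out | in_row] := boolP ((a < s) || (s + N <= a))%N; first by rewrite row_f ?row_out ?subrr.
have lt_asN : (a - s < N)%N by move: in_row; lia.
have -> : a = (Ordinal lt_asN + s)%N by rewrite /= subnK //; move: in_row; lia.
by rewrite row_in subrr.
Qed.

(* The paper's w^(j)_lambda, in both cases: for l2 = 0 the middle factor is 1. *)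
Definition hwv_w j : R := y0 ^+ j * (y0 * z1 - y1 * z0) ^+ l2 * z0 ^+ (l1 - l2 - j).

Lemma pder2_hwv_w (a b : R) k1 k2 (al be ga : R) j :
  pder2 a b k1 k2 y0 = al * y0 -> pder2 a b k1 k2 z0 = be * z0 ->
  pder2 a b k1 k2 (y0 * z1 - y1 * z0) = ga * (y0 * z1 - y1 * z0) ->
  pder2 a b k1 k2 (hwv_w j) = (al *+ j + ga *+ l2 + be *+ (l1 - l2 - j)) * hwv_w j.
Proof.
by move=> Dy Dz DD; apply: pder2_eigM; first apply: pder2_eigM; apply: pder2_eigX.
Qed.

Lemma hwv_w_Ey j : pder2 y0 y1 0 1 (hwv_w j) = (j + l2)%:R * hwv_w j.
Proof. by rewrite (@pder2_hwv_w _ _ _ _ 1 0 1); pder2_mvars. Qed.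

Lemma hwv_w_Ez j : (j <= l1 - l2)%N -> pder2 z0 z1 d (d + 1) (hwv_w j) = (l1 - j)%:R * hwv_w j.
Proof.
move=> le_j; rewrite (@pder2_hwv_w _ _ _ _ 0 1 1); [|pder2_mvars ..].
by rewrite mul0rn add0r -natrD; congr (_%:R * _); lia.
Qed.

Lemma hwv_w_Euler i j : (j <= l1 - l2)%N -> (i < d)%N ->
  pder2 (y K d i) (z K d i) i (d + i) (hwv_w j) = (wt l1 l2 i)%:R * hwv_w j.
Proof.
move=> le_j; rewrite /y /z /wt; case: i => [|[|i]] lt_id /=.
- rewrite addn0 (@pder2_hwv_w _ _ _ _ 1 1 1); [|pder2_mvars ..].
  by rewrite -!natrD; congr (_%:R * _); lia.
- by rewrite (@pder2_hwv_w _ _ _ _ 0 0 1); pder2_mvars.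
- by rewrite (@pder2_hwv_w _ _ _ _ 0 0 0); pder2_mvars.
Qed.

Lemma Dder_hwv_w i k j : (i < k)%N -> (k < d)%N -> Dder K d i k (hwv_w j) = 0.
Proof.
move=> lt_ik lt_kd; rewrite DderE /y /z -[RHS](mul0r (hwv_w j)).
case: k lt_ik lt_kd => [|[|k]] // lt_ik lt_kd.
  have -> : i = 0%N by lia.
  by rewrite addn0 (@pder2_hwv_w _ _ _ _ 0 0 0); pder2_mvars.
by rewrite (@pder2_hwv_w _ _ _ _ 0 0 0); pder2_mvars.
Qed.

Lemma leq_sum_ord01 (e : nat -> nat) : (e 0 + e 1 <= \sum_(i < d) e i)%N.
Proof. by rewrite -(subnKC d_ge2) !big_ord_recl addnA leq_addr. Qed.

Lemma mcoef_y0z0z1 p q r :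
  coef (y0 ^+ p * (z0 ^+ q * (z1 ^+ r * 1))) (yz_exp p 0 q r) = 1.
Proof.
rewrite (mcoefXnM_peel (yz_exp 0 0 q r)); [|yz_cases ..].
rewrite (mcoefXnM_peel (yz_exp 0 0 0 r)); [|yz_cases ..].
by rewrite (mcoefXnM_peel (fun=> 0%N)) ?mcoef1_0 //; yz_cases.
Qed.

Lemma mcoef_hwv_w_top j : (j <= l1 - l2)%N -> coef (hwv_w j) (wt_exp (j + l2) 0) = 1.
Proof.
move=> le_j; have [t Dt] := exprD_mod_mul (y0 * z1) (- z0) y1 l2.
have -> : hwv_w j = y0 ^+ (j + l2) * (z0 ^+ (l1 - l2 - j) * (z1 ^+ l2 * 1))
                    + y1 * (y0 ^+ j * t * z0 ^+ (l1 - l2 - j)).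
  rewrite /hwv_w (_ : y0 * z1 - y1 * z0 = y0 * z1 + y1 * - z0) ?Dt; last by ring.
  by rewrite exprMn exprD; ring.
rewrite mcoefD mcoefXM /= ?addr0; last lia.
by rewrite /wt_exp subn0 (_ : l1 - (j + l2) = l1 - l2 - j)%N ?mcoef_y0z0z1 //; lia.
Qed.

Lemma mcoef_hwv_w_row j a : (j <= l1 - l2)%N ->
  coef (hwv_w j) (wt_exp a 0) = (a == j + l2)%N%:R.
Proof.
move=> le_j; have [->|ne] := eqVneq a (j + l2)%N; first exact: mcoef_hwv_w_top.
have [//|nz] := eqVneq (coef (hwv_w j) (wt_exp a 0)) 0.
have := euler_support charK0 (hwv_w_Ey j) nz ltac:(lia) ltac:(lia).
by rewrite /wt_exp /yz_exp /= addn0 => a_jl2; rewrite a_jl2 eqxx in ne.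
Qed.

Lemma hwv_w_is_hwv j : (0 < j + l2)%N -> (j < l1)%N -> (j <= l1 - l2)%N ->
  is_hwv K d (wt l1 l2) (hwv_w j).
Proof.
move=> deg_y deg_z le_j; split.
- apply/eqP => w0; have := mcoef_hwv_w_top le_j.
  by rewrite w0 mcoef0 => /eqP; rewrite eq_sym oner_eq0.
- move=> e nz.
  have := euler_support charK0 (hwv_w_Ey j) nz ltac:(lia) ltac:(lia).
  have := euler_support charK0 (hwv_w_Ez le_j) nz ltac:(lia) ltac:(lia).
  have := leq_sum_ord01 e; have := leq_sum_ord01 (fun i => e (d + i)%N).
  rewrite /= addn0; lia.
- by move=> e nz i lt_id; apply: (euler_support charK0 (hwv_w_Euler le_j lt_id) nz); lia.
- by move=> i k; apply: Dder_hwv_w.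
Qed.

Lemma inG2_row_ends f : l2 = 0%N -> inG2 K d f ->
  coef f (wt_exp 0 0) = 0 /\ coef f (wt_exp l1 0) = 0.
Proof.
move=> l2_0 fG; split; [have [//|/fG[+ _]] := eqVneq (coef f (wt_exp 0 0)) 0
                       | have [//|/fG[_ +]] := eqVneq (coef f (wt_exp l1 0)) 0];
  by rewrite big1 // => i _; have := ltn_ord i; rewrite /wt_exp l2_0 subnn; yz_cases.
Qed.

Lemma max_hwv_system_two_rows : (0 < l2)%N ->
  max_hwv_system K d (wt l1 l2) (l1 - l2 + 1) (fun j => hwv_w j).
Proof.
move=> l2_gt0; apply: (@max_hwv_system_of_row _ l2); first lia.
- by move=> k; apply: hwv_w_is_hwv; have := ltn_ord k; lia.
- by move=> k a _; apply: mcoef_hwv_w_row; have := ltn_ord k; lia.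
move=> f [_ _ _ Df] a le_al1 out; apply: Dder01_coef_low; first exact: Df.
by move: out; lia.
Qed.

Lemma max_hwv_system_one_row : l2 = 0%N -> (2 <= l1)%N ->
  max_hwv_system K d (wt l1 l2) (l1 - 1) (fun j => hwv_w j.+1).
Proof.
move=> l2_0 l1_ge2; apply: (@max_hwv_system_of_row _ 1); first lia.
- by move=> k; apply: hwv_w_is_hwv; have := ltn_ord k; lia.
- by move=> k a _; rewrite mcoef_hwv_w_row l2_0 ?addn0 ?addn1 //; have := ltn_ord k; lia.
move=> f [_ fG _ _] a le_al1 out; have [coef_0 coef_l1] := inG2_row_ends l2_0 fG.
by have [->|->] : a = 0%N \/ a = l1 by move: out; lia.
Qed.

End HighestWeightVectors.

Theorem lemma3p3 (K : fieldType) (charK0 : [pchar K] =i pred0)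
  (d n l1 l2 : nat) (hd : (2 <= d)%N) (hn : (2 <= n)%N)
  (hl : (l2 <= l1)%N) (hsum : (l1 + l2)%N = n) :
  (l2 = 0%N ->
     max_hwv_system K d (wt l1 l2) _
       (fun j : 'I_(n - 1)%N =>
          y K d 0 ^+ (j + 1)%N * z K d 0 ^+ (n - (j + 1)%N))) /\
  ((0 < l2)%N ->
     max_hwv_system K d (wt l1 l2) _
       (fun j : 'I_(l1 - l2 + 1)%N =>
          y K d 0 ^+ j * (y K d 0 * z K d 1 - y K d 1 * z K d 0) ^+ l2
            * z K d 0 ^+ (l1 - l2 - j)%N)).
Proof.
split=> [l2_0 | l2_gt0].
- subst l2 n; rewrite addn0 in hn *.
  apply: (eq_max_hwv_system (max_hwv_system_one_row charK0 hd hl erefl hn)) => j.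
  by rewrite /hwv_w /y /z addn0 expr0 mulr1 subn0 addn1.
- apply: (eq_max_hwv_system (max_hwv_system_two_rows charK0 hd hl l2_gt0)) => j.
  by rewrite /hwv_w /y /z addn0.
Qed.
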